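(* Let $m$ be a positive integer, $n=2^m$, and let the dihedral group $D_n=\langle r,f\mid r^n=f^2=1,\ frf=r^{-1}\rangle$ act on $\{0,\dots,n-1\}$ by $r\cdot i=i+1 \bmod n$ and $f\cdot i=-i \bmod n$ (the symmetries of the vertices of a regular $n$-gon). Let $W:D_n\to U(\mathbb{C}^{2^m}\otimes\mathbb{C}^2)$ be the unitary representation $W(\sigma)\lvert i\rangle\otimes\lvert\alpha\rangle=\lvert\sigma\cdot i\rangle\otimes\lvert\alpha\rangle$ for $i\in\{0,\dots,n-1\}$, $\alpha\in\{0,1\}$. Let $D=\mathrm{diag}(e^{i\theta_0},\dots,e^{i\theta_{2^m-1}})$ acting on $\mathbb{C}^{2^m}$, with pairwise distinct phases $e^{i\theta_j}$. Let $\mathcal{Q}$ be the subgroup of $U(\mathbb{C}^{2^m}\otimes\mathbb{C}^2)$ generated by $\pm iI$, $I\otimes X$, $I\otimes Z$, $W(D_n)$ and $D\otimes I$, where $X,Z$ are the Pauli matrices on $\mathbb{C}^2$. Then every element of $U(\mathbb{C}^{2^m}\otimes\mathbb{C}^2)$ can be written as a complex linear combination of elements of $\mathcal{Q}$. *)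

From HB Require Import structures.
From mathcomp Require Import all_boot all_order all_algebra.
From mathcomp Require Import complex mxtens.
From mathcomp Require Import reals.
Set Implicit Arguments. Unset Strict Implicit. Unset Printing Implicit Defensive.
Import Order.TTheory GRing.Theory Num.Theory.
Local Open Scope ring_scope.
Local Open Scope complex_scope.

Section Defs.
Variable R : realType.
Local Notation C := R[i].

Definition adjmx {n} (M : 'M[C]_n) : 'M[C]_n := (map_mx Num.conj M)^T.
Definition unitary {n} (M : 'M[C]_n) : Prop := M *m adjmx M = 1%:M.

Definition pauliX : 'M[C]_2 := \matrix_(a < 2, b < 2) ((a != b)%:R).
Definition pauliZ : 'M[C]_2 :=
  \matrix_(a < 2, b < 2) (if a == b then (if val a == 0%N then 1 else -1) else 0).

(* dihedral action on {0,...,n-1}: the element r^k f^b sends i to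
   k + (-1)^b i mod n *)
Lemma dih_proof n (i : 'I_n) (x : nat) : (x %% n < n)%N.
Proof. by rewrite ltn_pmod // (leq_ltn_trans (leq0n i) (ltn_ord i)). Qed.
Definition dih_act n (k : 'I_n) (b : bool) (i : 'I_n) : 'I_n :=
  Ordinal (@dih_proof n i (k + (if b then n - i else i))%N).

Definition permat n (sigma : 'I_n -> 'I_n) : 'M[C]_n :=
  \matrix_(a, b) ((a == sigma b)%:R).

Definition Wrep n (k : 'I_n) (b : bool) : 'M[C]_(n * 2) :=
  permat (dih_act k b) *t (1%:M : 'M[C]_2).

Definition Qgens m (d : 'I_(2 ^ m) -> C) (M : 'M[C]_(2 ^ m * 2)) : Prop :=
  M = 'i%:M \/ M = - 'i%:M \/
  M = (1%:M : 'M[C]_(2 ^ m)) *t pauliX \/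
  M = (1%:M : 'M[C]_(2 ^ m)) *t pauliZ \/
  (exists (k : 'I_(2 ^ m)) (b : bool), M = Wrep k b) \/
  M = diag_mx (\row_j d j) *t (1%:M : 'M[C]_2).

Inductive gen_group {N} (S : 'M[C]_N -> Prop) : 'M[C]_N -> Prop :=
| gen_base M : S M -> gen_group S M
| gen_one : gen_group S 1%:M
| gen_mul M1 M2 : gen_group S M1 -> gen_group S M2 -> gen_group S (M1 *m M2)
| gen_inv M : gen_group S M -> gen_group S (invmx M).

Definition in_lin_span {N} (S : 'M[C]_N -> Prop) (M : 'M[C]_N) : Prop :=
  exists (k : nat) (c : 'I_k -> C) (A : 'I_k -> 'M[C]_N),
    (forall j, S (A j)) /\ M = \sum_(j < k) c j *: A j.

End Defs.

From HB Require Import structures.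
From mathcomp Require Import all_boot all_order all_algebra.
From mathcomp Require Import complex mxtens.
From mathcomp Require Import reals.
Set Implicit Arguments. Unset Strict Implicit. Unset Printing Implicit Defensive.
Import Order.TTheory GRing.Theory Num.Theory.
Local Open Scope ring_scope.
Local Open Scope complex_scope.

(* The linear span of a group of matrices is closed under products, hence a
   unital subalgebra of M_{2n}(C).  Lagrange interpolation in the diagonal
   matrix D, whose eigenvalues are distinct, produces every diagonal matrix
   unit E_jj, and multiplying by the rotations of the n-gon, which act
   transitively on the vertices, produces every E_ij.  In the same way Z and X
   produce all matrix units of M_2(C).  Since
   E_ij (x) E_ab = (E_ij (x) I)(I (x) E_ab), the span is the whole matrix
   algebra, so it contains every unitary. *)

Record mxalg_closed (F : pzRingType) (N : nat) (P : 'M[F]_N -> Prop) : Prop :=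
  MxalgClosed {
    mxalg1 : P 1%:M;
    mxalgD : forall A B, P A -> P B -> P (A + B);
    mxalgZ : forall a A, P A -> P (a *: A);
    mxalgM : forall A B, P A -> P B -> P (A *m B)
  }.

Section MatrixSubalgebra.
Variables (F : pzRingType) (N : nat) (P : 'M[F]_N -> Prop).
Hypothesis algP : mxalg_closed P.

Lemma mxalg0 : P 0.
Proof. by rewrite -(scale0r 1%:M); apply/(mxalgZ algP)/(mxalg1 algP). Qed.

Lemma mxalg_sum (I : Type) (r : seq I) (Q : pred I) (G : I -> 'M[F]_N) :
  (forall i, Q i -> P (G i)) -> P (\sum_(i <- r | Q i) G i).
Proof. by move=> PG; apply: (big_ind P mxalg0 (mxalgD algP)). Qed.

Lemma mxalg_full_delta : (forall i j, P (delta_mx i j)) -> forall A, P A.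
Proof.
move=> Pdelta A; rewrite (matrix_sum_delta A).
by do 2!apply: mxalg_sum => ? _; apply/(mxalgZ algP).
Qed.

End MatrixSubalgebra.

Section Interpolation.
Variables (F : fieldType) (N : nat) (P : 'M[F]_N -> Prop).
Hypothesis algP : mxalg_closed P.
Variable d : 'I_N -> F.
Hypothesis Pd : P (diag_mx (\row_i d i)).

Lemma mxalg_diag_horner (p : {poly F}) : P (diag_mx (\row_i p.[d i])).
Proof.
elim/poly_ind: p => [|p c IHp].
  rewrite (_ : diag_mx _ = 0); first exact: mxalg0.
  by apply/matrixP=> a b; rewrite !mxE horner0 mul0rn.
rewrite (_ : diag_mx _ = diag_mx (\row_i p.[d i]) *m diag_mx (\row_i d i)
                          + c *: 1%:M).
  apply/(mxalgD algP); first exact/(mxalgM algP).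
  exact/(mxalgZ algP)/(mxalg1 algP).
rewrite mulmx_diag; apply/matrixP=> a b; rewrite !mxE hornerMXaddC.
by case: (a == b); rewrite ?mulr1 ?mulr0 ?addr0.
Qed.

Lemma mxalg_delta_diag (j : 'I_N) : injective d -> P (delta_mx j j).
Proof.
move=> inj_d; pose p := \prod_(l | l != j) ('X - (d l)%:P).
have pE x : p.[x] = \prod_(l | l != j) (x - d l).
  by rewrite horner_prod; apply: eq_bigr => l _; rewrite hornerXsubC.
have pj_neq0 : p.[d j] != 0.
  rewrite pE; apply/prodf_neq0 => l lj; rewrite subr_eq0.
  by apply: contra lj => /eqP/inj_d ->.
rewrite (_ : delta_mx j j = p.[d j]^-1 *: diag_mx (\row_i p.[d i])).
  exact/(mxalgZ algP)/mxalg_diag_horner.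
apply/matrixP=> a b; rewrite !mxE; case: (eqVneq a b) => [<-|]; last first.
  move=> ab; rewrite mulr0n mulr0.
  by case: andP => // -[/eqP aj /eqP bj]; rewrite aj bj eqxx in ab.
rewrite andbb mulr1n; have [->|aj] := eqVneq a j; first by rewrite mulVf.
by rewrite [p.[d a]]pE (bigD1 a) //= subrr mul0r mulr0.
Qed.

End Interpolation.

Section TensorProduct.
Variable F : comPzRingType.

Lemma tensmxDl m n p q (A B : 'M[F]_(m, n)) (M : 'M[F]_(p, q)) :
  (A + B) *t M = A *t M + B *t M.
Proof. by apply/matrixP=> i j; rewrite !mxE mulrDl. Qed.

Lemma tensmxZl m n p q a (A : 'M[F]_(m, n)) (M : 'M[F]_(p, q)) :
  (a *: A) *t M = a *: (A *t M).
Proof. by apply/matrixP=> i j; rewrite !mxE mulrA. Qed.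

Lemma tensmxDr m n p q (A B : 'M[F]_(m, n)) (M : 'M[F]_(p, q)) :
  M *t (A + B) = M *t A + M *t B.
Proof. by apply/matrixP=> i j; rewrite !mxE mulrDr. Qed.

Lemma tensmxZr m n p q a (A : 'M[F]_(m, n)) (M : 'M[F]_(p, q)) :
  M *t (a *: A) = a *: (M *t A).
Proof. by apply/matrixP=> i j; rewrite !mxE mulrCA. Qed.

Lemma eq_mxtens_index m n (i i' : 'I_m) (a a' : 'I_n) :
  (mxtens_index (i, a) == mxtens_index (i', a')) = (i == i') && (a == a').
Proof. by rewrite (can_eq (@mxtens_indexK m n)) xpair_eqE. Qed.

Lemma tens_delta_mx m n p q (i : 'I_m) (j : 'I_n) (a : 'I_p) (b : 'I_q) :
  (delta_mx i j : 'M[F]_(m, n)) *t (delta_mx a b : 'M[F]_(p, q))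
  = delta_mx (mxtens_index (i, a)) (mxtens_index (j, b)).
Proof.
apply/matrixP=> x y.
case: (mxtens_indexP x) => i' a'; case: (mxtens_indexP y) => j' b'.
rewrite tensmxE !mxE !eq_mxtens_index -natrM mulnb.
by rewrite -!andbA; case: (i' == i); rewrite //= andbCA.
Qed.

Lemma tens1mx1 m n : (1%:M : 'M[F]_m) *t (1%:M : 'M[F]_n) = 1%:M.
Proof.
apply/matrixP=> x y.
case: (mxtens_indexP x) => i a; case: (mxtens_indexP y) => j b.
by rewrite tensmxE !mxE eq_mxtens_index -natrM mulnb.
Qed.

Variables (m n : nat) (P : 'M[F]_(m * n) -> Prop).
Hypothesis algP : mxalg_closed P.

Lemma mxalg_tensl : mxalg_closed (fun A : 'M[F]_m => P (A *t (1%:M : 'M_n))).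
Proof.
split=> [|A B PA PB|a A PA|A B PA PB].
- by rewrite tens1mx1; apply: mxalg1.
- by rewrite tensmxDl; apply: mxalgD.
- by rewrite tensmxZl; apply: mxalgZ.
- have -> : (A *m B) *t (1%:M : 'M_n) = (A *t 1%:M) *m (B *t 1%:M).
    by rewrite tensmx_mul mulmx1.
  exact: mxalgM.
Qed.

Lemma mxalg_tensr : mxalg_closed (fun B : 'M[F]_n => P ((1%:M : 'M_m) *t B)).
Proof.
split=> [|A B PA PB|a A PA|A B PA PB].
- by rewrite tens1mx1; apply: mxalg1.
- by rewrite tensmxDr; apply: mxalgD.
- by rewrite tensmxZr; apply: mxalgZ.
- have -> : (1%:M : 'M_m) *t (A *m B) = (1%:M *t A) *m (1%:M *t B).
    by rewrite tensmx_mul mulmx1.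
  exact: mxalgM.
Qed.

Lemma mxalg_full_tens :
  (forall A, P (A *t (1%:M : 'M_n))) -> (forall B, P ((1%:M : 'M_m) *t B)) ->
  forall M, P M.
Proof.
move=> PA PB; apply: mxalg_full_delta => // x y.
case: (mxtens_indexP x) => i a; case: (mxtens_indexP y) => j b.
by rewrite -tens_delta_mx tensmx_decr; apply: mxalgM.
Qed.

End TensorProduct.

Section ComplexMatrices.
Variable R : realType.
Local Notation C := R[i].

Section LinearSpan.
Variables (N : nat) (S : 'M[C]_N -> Prop).

Lemma mem_lin_span M : S M -> in_lin_span S M.
Proof.
by move=> SM; exists 1%N, (fun=> 1), (fun=> M); rewrite big_ord1 scale1r.
Qed.

Lemma lin_span0 : in_lin_span S 0.
Proof.
by exists 0%N, (fun=> 0), (fun=> 0); rewrite big_ord0; split=> // -[].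
Qed.

Lemma lin_spanD A B :
  in_lin_span S A -> in_lin_span S B -> in_lin_span S (A + B).
Proof.
move=> [k1 [c1 [A1 [SA1 ->]]]] [k2 [c2 [A2 [SA2 ->]]]].
pose glue T (f1 : 'I_k1 -> T) (f2 : 'I_k2 -> T) j :=
  match split j with inl a => f1 a | inr b => f2 b end.
exists (k1 + k2)%N, (glue _ c1 c2), (glue _ A1 A2); split.
  by move=> j; rewrite /glue; case: (split j).
by rewrite big_split_ord /glue; congr (_ + _); apply: eq_bigr => j _;
  rewrite ?(unsplitK (inl _ j)) ?(unsplitK (inr _ j)).
Qed.

Lemma lin_spanZ a A : in_lin_span S A -> in_lin_span S (a *: A).
Proof.
move=> [k [c [A1 [SA ->]]]]; exists k, (fun j => a * c j), A1; split=> //.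
by rewrite scaler_sumr; apply: eq_bigr => j _; rewrite scalerA.
Qed.

Lemma lin_span_sum (I : Type) (r : seq I) (Q : pred I) (G : I -> 'M[C]_N) :
  (forall i, Q i -> in_lin_span S (G i)) ->
  in_lin_span S (\sum_(i <- r | Q i) G i).
Proof. by move=> SG; apply: (big_ind _ lin_span0 lin_spanD). Qed.

Lemma lin_span_mxalg :
  S 1%:M -> (forall A B, S A -> S B -> S (A *m B)) ->
  mxalg_closed (in_lin_span S).
Proof.
move=> S1 mulS; split; [exact: mem_lin_span | exact: lin_spanD |
                         exact: lin_spanZ |].
move=> _ _ [k1 [c1 [A1 [SA1 ->]]]] [k2 [c2 [A2 [SA2 ->]]]].
rewrite mulmx_suml; apply: lin_span_sum => j _.
rewrite -scalemxAl mulmx_sumr; apply/lin_spanZ/lin_span_sum => l _.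
rewrite -scalemxAr; apply: lin_spanZ.
exact/mem_lin_span/mulS.
Qed.

End LinearSpan.

Lemma gen_group_span_mxalg N (S : 'M[C]_N -> Prop) :
  mxalg_closed (in_lin_span (gen_group S)).
Proof. apply: lin_span_mxalg => [|A B]; [exact: gen_one | exact: gen_mul]. Qed.

Lemma permat_id n : permat R (@id 'I_n) = 1%:M.
Proof. by apply/matrixP=> a b; rewrite !mxE. Qed.

Lemma mul_delta_permat n (s : 'I_n -> 'I_n) (j : 'I_n) : injective s ->
  delta_mx (s j) (s j) *m permat R s = delta_mx (s j) j.
Proof.
move=> inj_s; apply/matrixP=> a b; rewrite !mxE (bigD1 (s j)) //= big1.
  by rewrite !mxE eqxx andbT addr0 -natrM mulnb (inj_eq inj_s) [b == j]eq_sym.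
by move=> c /negbTE cj; rewrite !mxE cj andbF mul0r.
Qed.

Lemma mxalg_full_diag_perm n (P : 'M[C]_n -> Prop) (K : Type)
    (s : K -> 'I_n -> 'I_n) (d : 'I_n -> C) :
  mxalg_closed P -> injective d -> (forall k, injective (s k)) ->
  (forall i j, exists k, s k j = i) ->
  P (diag_mx (\row_i d i)) -> (forall k, P (permat R (s k))) -> forall A, P A.
Proof.
move=> algP inj_d inj_s s_trans Pd Ps; apply: mxalg_full_delta => // i j.
have [k <-] := s_trans i j; rewrite -mul_delta_permat //.
by apply: (mxalgM algP); [exact: (mxalg_delta_diag algP Pd) | exact: Ps].
Qed.

Lemma dih_rot_inj n (k : 'I_n) : injective (dih_act k false).
Proof.
move=> a b /(congr1 val) /= /eqP; rewrite eqn_modDl !modn_small //.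
by move/eqP/val_inj.
Qed.

Lemma dih_rot_transitive n (i j : 'I_n) : exists k, dih_act k false j = i.
Proof.
have n_gt0 : (0 < n)%N by apply: leq_ltn_trans (ltn_ord i).
exists (Ordinal (ltn_pmod (i + (n - j)) n_gt0)); apply: val_inj => /=.
by rewrite modnDml -addnA subnK 1?ltnW // modnDr modn_small.
Qed.

Lemma pauliZ_diag : pauliZ R = diag_mx (\row_a (-1) ^+ (a : nat)).
Proof. by apply/matrixP=> -[[|[|a]] ?] // [[|[|b]] ?]; rewrite !mxE. Qed.

Lemma pauliX_permat : pauliX R = permat R (@rev_ord 2).
Proof. by apply/matrixP=> -[[|[|a]] ?] // [[|[|b]] ?]; rewrite !mxE. Qed.

Lemma mxalg_full_pauli (P : 'M[C]_2 -> Prop) :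
  mxalg_closed P -> P (pauliX R) -> P (pauliZ R) -> forall B, P B.
Proof.
move=> algP PX PZ.
pose s (b : bool) := if b then @rev_ord 2 else id.
apply: (@mxalg_full_diag_perm _ _ _ s (fun a : 'I_2 => (-1) ^+ (a : nat))) => //.
- have N1_neq1 : (-1 : C) != 1.
    by rewrite -subr_eq0 -opprD oppr_eq0 -mulr2n pnatr_eq0.
  move=> a b /eqP ab; apply: val_inj; move: ab.
  case: a b => [[|[|a]] ?] // [[|[|b]] ?] //=; rewrite ?expr0 ?expr1 //.
    by rewrite eq_sym (negbTE N1_neq1).
  by rewrite (negbTE N1_neq1).
- by case; [exact: rev_ord_inj | move=> ? ?].
- move=> a b; exists (a != b); apply: val_inj.
  by case: a b => [[|[|a]] ?] // [[|[|b]] ?].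
- by rewrite -pauliZ_diag.
- by case; rewrite /= -?pauliX_permat ?permat_id //; exact: (mxalg1 algP).
Qed.

End ComplexMatrices.

Theorem proposition4 (R : realType) (m : nat) (hm : (0 < m)%N)
  (d : 'I_(2 ^ m) -> R[i])
  (hd : forall j, `|d j| = 1)
  (hdist : injective d)
  (U : 'M[R[i]]_(2 ^ m * 2)) (hU : unitary U) :
  in_lin_span (gen_group (@Qgens R m d)) U.
Proof.
have algQ := gen_group_span_mxalg (@Qgens R m d).
have Qgen M : Qgens d M -> in_lin_span (gen_group (Qgens d)) M.
  by move=> QM; apply/mem_lin_span/gen_base.
apply: (mxalg_full_tens algQ) => [A|B].
- apply: (mxalg_full_diag_perm (s := fun k => dih_act k false)
           (mxalg_tensl algQ) hdist).
  + exact: dih_rot_inj.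
  + exact: dih_rot_transitive.
  + by apply: Qgen; do 5 right.
  + by move=> k; apply: Qgen; do 4 right; left; exists k, false.
- apply: (mxalg_full_pauli (mxalg_tensr algQ)); apply: Qgen.
  + by right; right; left.
  + by do 3 right; left.
Qed.
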